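(* Let $G=(V,E)$ be a graph and $P:=\{k\in V : \deg_G(k)=|V|-1\}$. Then (i) the set of vertices of $\{X\in\mathbb{S}^V_+ : \operatorname{tr}(X)=1,\ X_{ij}=0\ \forall ij\in E\}$ is $\{e_ke_k^{\mathsf T} : k\in P\}$; (ii) the set of vertices of $\{X\in\mathbb{S}^V_+ : \operatorname{tr}(X)=1,\ X_{ij}=0\ \forall ij\in E,\ X_{ij}\ge 0\ \forall ij\in\binom{V}{2}\setminus E\}$ is $\{e_ke_k^{\mathsf T} : k\in V\}$; (iii) the set of vertices of $\{X\in\mathbb{S}^V_+ : \operatorname{tr}(X)=1,\ X_{ij}\le 0\ \forall ij\in E\}$ is $\{e_ke_k^{\mathsf T} : k\in P\}$.
   Context: $\mathbb{S}^V_+$ denotes the real symmetric positive semidefinite matrices indexed by $V$, with trace inner product; $e_k$ are standard basis vectors of $\mathbb{R}^V$. For a convex set $\mathcal{C}$ in a finite-dimensional space $\mathbb{E}$ and $\bar x\in\mathcal{C}$, the normal cone is $N_{\mathcal{C}}(\bar x):=\{c : \langle c,x\rangle\le\langle c,\bar x\rangle\ \forall x\in\mathcal{C}\}$; $\bar x$ is a vertex if $\dim N_{\mathcal{C}}(\bar x)=\dim\mathbb{E}$ (here $\mathbb{E}=\mathbb{S}^V$). *)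

From HB Require Import structures.
From mathcomp Require Import all_boot all_order all_algebra.
From mathcomp Require Import reals.
Set Implicit Arguments. Unset Strict Implicit. Unset Printing Implicit Defensive.
Import Order.TTheory GRing.Theory Num.Theory.
Local Open Scope ring_scope.

Definition simple_graph n (E : rel 'I_n) : Prop :=
  (forall i j, E i j = E j i) /\ (forall i, ~~ E i i).

Definition deg n (E : rel 'I_n) (k : 'I_n) : nat := #|[set j | E k j]|.

Definition full_deg n (E : rel 'I_n) (k : 'I_n) : Prop := deg E k = (n - 1)%N.

Definition symmetric {R : realType} n (X : 'M[R]_n) : Prop := X^T = X.

Definition psd {R : realType} n (X : 'M[R]_n) : Prop :=
  symmetric X /\ forall x : 'cV[R]_n, 0 <= (x^T *m X *m x) 0 0.

Definition tip {R : realType} n (C X : 'M[R]_n) : R := \tr (C^T *m X).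

Definition normal_cone {R : realType} n (C : 'M[R]_n -> Prop) (Xb : 'M[R]_n)
  : 'M[R]_n -> Prop :=
  fun c => symmetric c /\ forall X, C X -> tip c X <= tip c Xb.

(* dimension of (the linear span = affine hull of) a set N of matrices
   that contains 0: the maximal size of a linearly independent family in N. *)
Definition set_dim {R : realType} n (N : 'M[R]_n -> Prop) (d : nat) : Prop :=
  (exists s : seq 'M[R]_n, (forall c, c \in s -> N c) /\ free s /\ size s = d) /\
  (forall s : seq 'M[R]_n, (forall c, c \in s -> N c) -> free s -> (size s <= d)%N).

Definition dim_sym (n : nat) : nat := (n * n.+1) %/ 2.

Definition is_vertex {R : realType} n (C : 'M[R]_n -> Prop) (Xb : 'M[R]_n) : Prop :=
  C Xb /\ set_dim (normal_cone C Xb) (dim_sym n).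

Definition ekek {R : realType} n (k : 'I_n) : 'M[R]_n := delta_mx k k.

Definition spec1 {R : realType} n (E : rel 'I_n) (X : 'M[R]_n) : Prop :=
  psd X /\ \tr X = 1 /\ (forall i j, E i j -> X i j = 0).

Definition spec2 {R : realType} n (E : rel 'I_n) (X : 'M[R]_n) : Prop :=
  psd X /\ \tr X = 1 /\ (forall i j, E i j -> X i j = 0) /\
  (forall i j, i != j -> ~~ E i j -> 0 <= X i j).

Definition spec3 {R : realType} n (E : rel 'I_n) (X : 'M[R]_n) : Prop :=
  psd X /\ \tr X = 1 /\ (forall i j, E i j -> X i j <= 0).

From Pilot Require Import Defs.
From HB Require Import structures.
From mathcomp Require Import all_boot all_order all_algebra.
From mathcomp Require Import reals.
From mathcomp Require Import zify ring lra.
Import Order.TTheory GRing.Theory Num.Theory.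

Set Implicit Arguments.
Unset Strict Implicit.
Unset Printing Implicit Defensive.

(* Any curve through a point X of a set C that stays in C has its tangent at X
   orthogonal to the normal cone at X, so a nonzero symmetric tangent keeps that
   cone from being full dimensional.  All three sets are spectraplexes cut by sign
   conditions that survive entrywise rescaling by positive numbers.  If X had two
   nonzero diagonal entries X_ii, X_jj, the renormalised congruences D X D with
   D = I + t (X_jj e_i - X_ii e_j) give such a curve with a nonzero tangent; hence
   every vertex is some e_k e_k^T.  If k has a non-neighbour j, the rank-one curve
   (e_k + t e_j)(e_k + t e_j)^T stays in the first and third sets, so e_k e_k^T is
   not a vertex there.  Conversely, when X_kj has a fixed sign on the set for all
   j <> k, one writes down dim S^V normal vectors at e_k e_k^T which are
   triangular with respect to the upper-triangular positions, hence free. *)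

Definition upper_pairs n : pred ('I_n * 'I_n) := fun p => (p.1 <= p.2)%N.
Arguments upper_pairs : clear implicits.

Lemma card_upper_pairs n : #|upper_pairs n| = dim_sym n.
Proof.
rewrite -sum1_card.
rewrite -(pair_big_dep xpredT (fun i j : 'I_n => (i <= j)%N) (fun _ _ => 1%N)) /=.
rewrite (exchange_big_dep xpredT) //=.
rewrite (eq_bigr (fun j : 'I_n => j.+1)) => [|j _]; last first.
  by rewrite (big_ord_narrow (ltn_ord j)) sum1_card card_ord.
rewrite -(big_mkord xpredT succn).
have -> : dim_sym n = 'C(n.+1, 2) by rewrite bin2 /dim_sym divn2 mulnC.
by rewrite -bin2_sum big_nat_recl.
Qed.

Local Open Scope ring_scope.

Section EchelonFree.
Variables (F : fieldType) (m p : nat).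

Lemma memv_span_entry (s : seq 'M[F]_(m, p)) i j v :
  (forall x, x \in s -> x i j = 0) -> v \in <<s>>%VS -> v i j = 0.
Proof.
move=> s0 sv; rewrite (coord_span (X := in_tuple s) sv) summxE big1 // => l _.
by rewrite mxE s0 ?mulr0 // mem_nth.
Qed.

Lemma free_echelon (T : eqType) (f : T -> 'M[F]_(m, p)) (piv : T -> 'I_m * 'I_p)
    (s : seq T) :
  all (fun x => f x (piv x).1 (piv x).2 != 0) s ->
  pairwise (fun x y => f y (piv x).1 (piv x).2 == 0) s ->
  free (map f s).
Proof.
elim: s => [|x s IHs] /=; first by rewrite nil_free.
move=> /andP[fx_neq0 pivs] /andP[/allP later0 pairs_s].
rewrite free_cons IHs // andbT; apply: contra fx_neq0 => /memv_span_entry -> //.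
by move=> _ /mapP[y ys ->]; apply/eqP; exact: later0.
Qed.

End EchelonFree.

Section SymmetricMatrices.
Variables (R : realType) (n : nat).
Implicit Types (c X Y Z W : 'M[R]_n).

(** * Symmetric matrices and the trace inner product *)

Lemma symmetric_entry X : Defs.symmetric X -> forall i j, X j i = X i j.
Proof. by move=> sX i j; rewrite -{1}sX mxE. Qed.

Lemma mxtrace_delta i j : \tr (delta_mx i j : 'M[R]_n) = (i == j)%:R.
Proof.
rewrite /mxtrace (bigD1 i) //= big1 ?addr0 => [|l /negPf li]; first by rewrite mxE eqxx.
by rewrite mxE li.
Qed.

Lemma sum_indicator (F : 'I_n -> R) i : \sum_l (l == i)%:R * F l = F i.
Proof.
rewrite -(big_pred1_eq +%R) big_mkcond; apply: eq_bigr => l _.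
by case: eqP; rewrite ?mul1r ?mul0r.
Qed.

Lemma delta_mx_offdiag i a b : a != b -> (delta_mx i i : 'M[R]_n) a b = 0.
Proof.
move=> ab; rewrite mxE; apply/eqP; rewrite pnatr_eq0 eqb0.
by apply: contra ab => /andP[/eqP-> /eqP->].
Qed.

Definition sym_pair (i j : 'I_n) : 'M[R]_n := delta_mx i j + delta_mx j i.

Lemma sym_pairE i j a b :
  sym_pair i j a b = ((a == i) && (b == j))%:R + ((a == j) && (b == i))%:R.
Proof. by rewrite !mxE. Qed.

Lemma sym_pair_symmetric i j : Defs.symmetric (sym_pair i j).
Proof. by rewrite /Defs.symmetric linearD /= !trmx_delta addrC. Qed.

Lemma sym_pairC i j : sym_pair i j = sym_pair j i.
Proof. exact: addrC. Qed.

Lemma symmetric_memv_span c : Defs.symmetric c ->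
  c \in <<[seq sym_pair p.1 p.2 | p <- enum (upper_pairs n)]>>%VS.
Proof.
move=> sc; have -> : c = 2^-1 *: \sum_i \sum_j c i j *: sym_pair i j.
  rewrite (eq_bigr (fun i => \sum_j c i j *: delta_mx i j + \sum_j c j i *: delta_mx j i)).
    rewrite big_split /= [r in _ + r]exchange_big /= -!matrix_sum_delta.
    by rewrite -mulr2n -scaler_nat scalerA mulVf ?scale1r // pnatr_eq0.
  move=> i _; rewrite -big_split /=; apply: eq_bigr => j _.
  by rewrite scalerDr (symmetric_entry sc).
apply/memvZ/memv_suml => i _; apply/memv_suml => j _; apply/memvZ.
wlog le_ij : i j / (i <= j)%N.
  by move=> sub; case: (leqP i j) => [/sub // | /ltnW /sub]; rewrite sym_pairC.
by apply: memv_span; apply/mapP; exists (i, j); rewrite ?mem_enum.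
Qed.

Lemma size_free_symmetric (s : seq 'M[R]_n) :
  (forall c, c \in s -> Defs.symmetric c) -> free s -> (size s <= dim_sym n)%N.
Proof.
move=> sym_s /eqP <-; rewrite -card_upper_pairs cardE.
rewrite -(size_map (fun p => sym_pair p.1 p.2)); apply: leq_trans (dim_span _).
by apply/dimvS/span_subvP => c /sym_s /symmetric_memv_span.
Qed.

Lemma tipE c X : tip c X = \sum_i \sum_j c i j * X i j.
Proof.
rewrite /tip /mxtrace exchange_big; apply: eq_bigr => j _; rewrite mxE.
by apply: eq_bigr => i _; rewrite mxE.
Qed.

Lemma tipC c X : tip c X = tip X c.
Proof. by rewrite !tipE; do 2!under eq_bigr do under eq_bigr do rewrite mulrC. Qed.

Lemma tipDl c1 c2 X : tip (c1 + c2) X = tip c1 X + tip c2 X.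
Proof. by rewrite /tip linearD mulmxDl mxtraceD. Qed.

Lemma tipZl a c X : tip (a *: c) X = a * tip c X.
Proof. by rewrite /tip linearZ -scalemxAl mxtraceZ. Qed.

Lemma tipBl c1 c2 X : tip (c1 - c2) X = tip c1 X - tip c2 X.
Proof. by rewrite /tip linearB mulmxBl linearB. Qed.

Lemma tipDr c X1 X2 : tip c (X1 + X2) = tip c X1 + tip c X2.
Proof. by rewrite /tip mulmxDr mxtraceD. Qed.

Lemma tipZr a c X : tip c (a *: X) = a * tip c X.
Proof. by rewrite /tip -scalemxAr mxtraceZ. Qed.

Lemma tip_deltal i j X : tip (delta_mx i j) X = X i j.
Proof.
rewrite tipE (bigD1 i) //= addrC big1 ?add0r => [|l /negPf li]; last first.
  by rewrite big1 // => l' _; rewrite mxE li mul0r.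
rewrite (bigD1 j) //= addrC big1 ?add0r => [|l /negPf lj]; last first.
  by rewrite mxE lj andbF mul0r.
by rewrite mxE !eqxx mul1r.
Qed.

Lemma tip_deltar i j c : tip c (delta_mx i j) = c i j.
Proof. by rewrite tipC tip_deltal. Qed.

Lemma tip_sym_pair i j X : tip (sym_pair i j) X = X i j + X j i.
Proof. by rewrite tipDl !tip_deltal. Qed.

Lemma tip_self_eq0 Z : tip Z Z = 0 -> Z = 0.
Proof.
rewrite tipE => /eqP; rewrite psumr_eq0 => [/allP Z0|i _]; last first.
  by apply: sumr_ge0 => j _; rewrite -expr2 sqr_ge0.
apply/matrixP => i j; move/(_ i (mem_index_enum i)): Z0.
rewrite psumr_eq0 => [/allP/(_ j (mem_index_enum j))|l _]; last by rewrite -expr2 sqr_ge0.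
by rewrite -expr2 sqrf_eq0 mxE => /eqP.
Qed.

Lemma memv_span_tip (s : seq 'M[R]_n) Z v :
  (forall c, c \in s -> tip c Z = 0) -> v \in <<s>>%VS -> tip v Z = 0.
Proof.
move=> s0 sv; rewrite (coord_span (X := in_tuple s) sv).
elim/big_rec: _ => [|l w _ w0]; first by rewrite -(scale0r 0) tipZl mul0r.
by rewrite tipDl tipZl w0 s0 ?mulr0 ?addr0 // mem_nth.
Qed.

Lemma normal_cone_full (C : 'M[R]_n -> Prop) Xb (s : seq 'M[R]_n) :
  (forall c, c \in s -> normal_cone C Xb c) -> free s -> size s = dim_sym n ->
  set_dim (normal_cone C Xb) (dim_sym n).
Proof.
move=> sN free_s size_s; split; first by exists s.
by move=> s' s'N /size_free_symmetric; apply=> c /s'N [].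
Qed.

(* [Z] lies outside the span of any free family in the cone, which could then
   be enlarged beyond [dim_sym n] symmetric matrices. *)
Lemma normal_cone_orthogonal_not_full (C : 'M[R]_n -> Prop) Xb Z :
  Defs.symmetric Z -> Z != 0 -> (forall c, normal_cone C Xb c -> tip c Z = 0) ->
  ~ set_dim (normal_cone C Xb) (dim_sym n).
Proof.
move=> sZ Z_neq0 NZ [[s [sN [free_s size_s]]] _].
have Z_notin : Z \notin <<s>>%VS.
  apply: contra Z_neq0 => /(memv_span_tip (fun c cs => NZ c (sN c cs))).
  by move/tip_self_eq0 ->.
have sym_Zs c : c \in Z :: s -> Defs.symmetric c.
  by rewrite inE => /predU1P[-> // | /sN []].
have := size_free_symmetric sym_Zs; rewrite free_cons Z_notin free_s /= size_s.
by rewrite ltnn => /(_ isT).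
Qed.

Lemma quadratic_nonpos_slope_eq0 (z K : R) :
  (forall t, -1/2 <= t <= 1/2 -> t * z + t ^+ 2 * K <= 0) -> z = 0.
Proof.
move=> h; apply/eqP/negPn/negP; rewrite -normr_gt0 => z_gt0.
have bound s : 0 < s <= 1/2 -> s * `|z| <= s ^+ 2 * `|K|.
  move=> /andP[s_gt0 s_le]; have := h s; have := h (- s).
  have K_ge := lerNnormlW (lexx `|K|); rewrite sqrrN.
  by case: (lerP 0 z) => [/ger0_norm|/ltr0_norm] ->; nra.
have den_gt0 : 0 < 2 * (`|z| + `|K|) by have := normr_ge0 K; lra.
pose s := `|z| / (2 * (`|z| + `|K|)).
have s_def : s * (2 * (`|z| + `|K|)) = `|z| by rewrite mulfVK // gt_eqF.
have s_gt0 : 0 < s by rewrite divr_gt0.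
have := bound s; rewrite s_gt0 ler_pdivrMr //= expr2 -mulrA ler_pM2l //.
have s_le_half : `|z| <= 1/2 * (2 * (`|z| + `|K|)) by have := normr_ge0 K; lra.
move=> /(_ s_le_half) z_le.
have := ler_wpM2r (ltW den_gt0) z_le; rewrite mulrAC s_def.
have := normr_ge0 K; nra.
Qed.

Lemma normal_cone_tangent (C : 'M[R]_n -> Prop) Xb Z W (q : R) : 0 <= q ->
  (forall t, -1/2 <= t <= 1/2 -> C ((1 + t ^+ 2 * q)^-1 *: (Xb + t *: Z + t ^+ 2 *: W))) ->
  forall c, normal_cone C Xb c -> tip c Z = 0.
Proof.
move=> q_ge0 curve c [_ c_normal].
apply: (@quadratic_nonpos_slope_eq0 _ (tip c W - q * tip c Xb)) => t t_small.
have norm_gt0 : 0 < 1 + t ^+ 2 * q by have := sqr_ge0 t; nra.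
have := c_normal _ (curve t t_small); rewrite tipZr !tipDr !tipZr ler_pdivrMl //.
nra.
Qed.

(** * Positive semidefinite matrices *)

Lemma psd_symmetric X : psd X -> forall i j, X j i = X i j.
Proof. by case=> /symmetric_entry. Qed.

Lemma quad_delta X i j :
  (delta_mx i (0 : 'I_1))^T *m X *m delta_mx j 0 = (X i j)%:M.
Proof. by rewrite trmx_delta -rowE -colE; apply/matrixP => a b; rewrite !ord1 !mxE. Qed.

Lemma psd_quad2 X i j (a b : R) : psd X ->
  0 <= a ^+ 2 * X i i + 2 * a * b * X i j + b ^+ 2 * X j j.
Proof.
move=> psdX; have := psdX.2 (a *: delta_mx i 0 + b *: delta_mx j 0).
rewrite !linearD !linearZ /= !mulmxDl -!scalemxAl !quad_delta !mxE /=.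
by rewrite (psd_symmetric psdX i j); congr (0 <= _); ring.
Qed.

Lemma psd_diag_ge0 X i : psd X -> 0 <= X i i.
Proof.
by move=> /(psd_quad2 i i 1 0); rewrite expr0n mul0r addr0 mulr0 mul0r addr0 expr1n mul1r.
Qed.

Lemma psd_offdiag_le X i j : psd X -> 2 * X i j <= X i i + X j j.
Proof. by move=> /(psd_quad2 i j 1 (-1)); rewrite sqrrN expr1n !mul1r; lra. Qed.

Lemma psd_diag_eq0 X i j : psd X -> X i i = 0 -> X i j = 0.
Proof.
move=> psdX Xii0; apply/eqP/negPn/negP => Xij_neq0.
have := psd_quad2 i j (- (X j j + 1) / (2 * X i j)) 1 psdX.
rewrite Xii0 mulr0 add0r expr1n mul1r mulr1.
have -> : 2 * (- (X j j + 1) / (2 * X i j)) * X i j = - (X j j + 1) by field.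
lra.
Qed.

Lemma psd_diag_le_trace X i : psd X -> X i i <= \tr X.
Proof.
move=> psdX; rewrite /mxtrace (bigD1 i) //= lerDl.
by apply: sumr_ge0 => j _; apply: psd_diag_ge0.
Qed.

Lemma psd_scale (a : R) X : 0 <= a -> psd X -> psd (a *: X).
Proof.
move=> a_ge0 [sX qX]; split; first by rewrite /Defs.symmetric linearZ /= sX.
by move=> x; rewrite -scalemxAr -scalemxAl mxE mulr_ge0.
Qed.

Lemma psd_mul_tr (x : 'cV[R]_n) : psd (x *m x^T).
Proof.
split=> [|y]; first by rewrite /Defs.symmetric trmx_mul trmxK.
rewrite mulmxA -mulmxA mxE big_ord1.
have -> : x^T *m y = (y^T *m x)^T by rewrite trmx_mul trmxK.
by rewrite [_^T 0 0]mxE -expr2 sqr_ge0.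
Qed.

Lemma psd_ekek k : psd (ekek k : 'M[R]_n).
Proof.
have -> : ekek k = delta_mx k (0 : 'I_1) *m (delta_mx k 0)^T :> 'M[R]_n.
  by rewrite trmx_delta mul_delta_mx.
exact: psd_mul_tr.
Qed.

Lemma psd_diag_support X : psd X -> \tr X = 1 ->
  (forall i j, i != j -> X i i = 0 \/ X j j = 0) -> exists k, X = ekek k.
Proof.
move=> psdX trX supp.
have [k Xkk] : exists k, X k k != 0.
  case: (pickP (fun k => X k k != 0)) => [k Xkk | X0]; first by exists k.
  move: trX; rewrite /mxtrace big1 => [/eqP|l _]; first by rewrite eq_sym oner_eq0.
  by apply/eqP; rewrite -[_ == 0]negbK X0.
have Xll l : l != k -> X l l = 0.
  by move=> lk; case: (supp l k lk) => // /eqP; rewrite (negPf Xkk).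
exists k; apply/matrixP => a b; rewrite /ekek mxE.
have [-> /=|ak] := eqVneq a k; last exact: psd_diag_eq0 _ psdX (Xll _ ak).
have [-> /=|bk] := eqVneq b k.
  by rewrite -trX /mxtrace (bigD1 k) //= big1 ?addr0 // => l; apply: Xll.
by rewrite -(psd_symmetric psdX) (psd_diag_eq0 _ psdX (Xll _ bk)).
Qed.

(** * Vertices of spectraplexes *)

(* [spec1 E], [spec2 E] and [spec3 E] are convertible to [spectraplex Q] for
   suitable [Q]. *)
Definition spectraplex (Q : 'M[R]_n -> Prop) X := psd X /\ \tr X = 1 /\ Q X.

Definition scaling_invariant (Q : 'M[R]_n -> Prop) :=
  forall (a : 'I_n -> 'I_n -> R) X,
    (forall i j, 0 < a i j) -> Q X -> Q (\matrix_(i, j) (a i j * X i j)).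

Lemma spectraplex_ekek Q k : Q (ekek k) -> spectraplex Q (ekek k).
Proof. by move=> Qk; split; [exact: psd_ekek | rewrite mxtrace_delta eqxx]. Qed.

Lemma ekek_edge_eq0 (E : rel 'I_n) k i j : simple_graph E -> E i j -> ekek k i j = 0 :> R.
Proof. by move=> [_ irrE] Eij; apply: delta_mx_offdiag; apply: contraTneq Eij => ->. Qed.

Definition diag_congr (e : 'I_n -> R) X := \matrix_(i, j) (e i * X i j * e j).

Definition diag_tangent (d : 'I_n -> R) X := \matrix_(i, j) ((d i + d j) * X i j).

Lemma psd_diag_congr e X : psd X -> psd (diag_congr e X).
Proof.
have -> : diag_congr e X = diag_mx (\row_i e i) *m X *m diag_mx (\row_i e i).
  by apply/matrixP => i j; rewrite mul_mx_diag mxE mul_diag_mx !mxE.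
move=> [sX qX]; split; first by rewrite /Defs.symmetric !trmx_mul tr_diag_mx sX mulmxA.
by move=> x; have := qX (diag_mx (\row_i e i) *m x); rewrite trmx_mul tr_diag_mx !mulmxA.
Qed.

Lemma diag_congr_expand d X t :
  diag_congr (fun l => 1 + t * d l) X =
  X + t *: diag_tangent d X + t ^+ 2 *: diag_congr d X.
Proof. by apply/matrixP => i j; rewrite !mxE; ring. Qed.

Lemma spectraplex_diag_congr Q X e : scaling_invariant Q -> spectraplex Q X ->
  (forall l, 0 < e l) -> 0 < \tr (diag_congr e X) ->
  spectraplex Q ((\tr (diag_congr e X))^-1 *: diag_congr e X).
Proof.
move=> invQ [psdX [_ QX]] e_gt0 tr_gt0; split; last split.
- by apply: psd_scale; [rewrite invr_ge0 ltW | apply: psd_diag_congr].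
- by rewrite mxtraceZ mulVf ?gt_eqF.
have -> : (\tr (diag_congr e X))^-1 *: diag_congr e X =
    \matrix_(i, j) ((\tr (diag_congr e X))^-1 * (e i * e j) * X i j).
  by apply/matrixP => i j; rewrite !mxE; ring.
by apply: invQ => // i j; rewrite !mulr_gt0 ?invr_gt0.
Qed.

(* Rescaling [Xb] by the positive diagonal [1 + t d] and renormalising the trace
   gives a curve in the spectraplex with tangent [diag_tangent d Xb] at [t = 0]. *)
Lemma diag_tangent_normal Q Xb d : scaling_invariant Q -> spectraplex Q Xb ->
  (forall l, -1 <= d l <= 1) -> \tr (diag_tangent d Xb) = 0 ->
  forall c, normal_cone (spectraplex Q) Xb c -> tip c (diag_tangent d Xb) = 0.
Proof.
move=> invQ CXb d_small trZ; have [psdXb [trXb _]] := CXb.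
have trW_ge0 : 0 <= \tr (diag_congr d Xb).
  by apply: sumr_ge0 => l _; apply/psd_diag_ge0/psd_diag_congr.
apply: (normal_cone_tangent (W := diag_congr d Xb) trW_ge0) => t t_small.
have tr_e : \tr (diag_congr (fun l => 1 + t * d l) Xb) = 1 + t ^+ 2 * \tr (diag_congr d Xb).
  by rewrite diag_congr_expand !mxtraceD !mxtraceZ trXb trZ mulr0 addr0.
rewrite -diag_congr_expand -tr_e; apply: spectraplex_diag_congr => // [l|].
  by have := d_small l; case/andP: t_small; nra.
by rewrite tr_e; have := sqr_ge0 t; nra.
Qed.

Lemma vertex_diag_support Q Xb : scaling_invariant Q -> is_vertex (spectraplex Q) Xb ->
  forall i j, i != j -> Xb i i = 0 \/ Xb j j = 0.
Proof.
move=> invQ [CXb full] i j ij; have [psdXb [trXb _]] := CXb.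
case: (Xb i i =P 0) => [|/eqP Xii]; [by left | right; apply/eqP/negP => /negP Xjj].
pose d l := Xb j j * (l == i)%:R - Xb i i * (l == j)%:R.
have diag01 l : 0 <= Xb l l <= 1 by rewrite psd_diag_ge0 //= -trXb psd_diag_le_trace.
have d_small l : -1 <= d l <= 1.
  have := diag01 i; have := diag01 j; rewrite /d.
  by case: (l == i); case: (l == j); rewrite /= ?mulr1 ?mulr0; lra.
have trZ : \tr (diag_tangent d Xb) = 0.
  rewrite /mxtrace (eq_bigr (fun l => (l == i)%:R * (2 * Xb j j * Xb l l)
    - (l == j)%:R * (2 * Xb i i * Xb l l))) => [|l _]; last by rewrite mxE /d; ring.
  by rewrite sumrB !sum_indicator; ring.
apply: (normal_cone_orthogonal_not_full _ _
  (diag_tangent_normal invQ CXb d_small trZ) full).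
  by apply/matrixP => x y; rewrite !mxE (psd_symmetric psdXb) addrC.
apply/negP => /eqP/matrixP/(_ i i); rewrite !mxE /d eqxx (negPf ij) /= => /eqP.
by rewrite mulr1 mulr0 subr0 -mulr2n mulf_eq0 mulrn_eq0 (negPf Xjj) (negPf Xii).
Qed.

Lemma vertex_eq_ekek Q X : scaling_invariant Q -> is_vertex (spectraplex Q) X ->
  exists k, X = ekek k.
Proof.
move=> invQ vX; have [psdX [trX _]] := vX.1.
exact: psd_diag_support (vertex_diag_support invQ vX).
Qed.

Lemma vertex_ekek_adj Q (E : rel 'I_n) k j : simple_graph E ->
  (forall X, (forall a b, E a b -> X a b = 0) -> Q X) ->
  is_vertex (spectraplex Q) (ekek k) -> j != k -> E k j.
Proof.
move=> [symE irrE] Q_vanish [_ full] jk; apply/negPn/negP => nEkj.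
apply: (normal_cone_orthogonal_not_full (sym_pair_symmetric k j) _ _ full).
  apply/negP => /eqP/matrixP/(_ k j); rewrite !mxE !eqxx (negPf jk) andbF addr0.
  by move/eqP; rewrite oner_eq0.
apply: (normal_cone_tangent (W := ekek j) ler01) => t _; rewrite mulr1.
pose v : 'cV[R]_n := delta_mx k 0 + t *: delta_mx j 0.
have vvT : v *m v^T = ekek k + t *: sym_pair k j + t ^+ 2 *: ekek j.
  by apply/matrixP => a b; rewrite !mxE big_ord1 !mxE !eqxx !andbT -!mulnb !natrM; ring.
have tr_vvT : \tr (v *m v^T) = 1 + t ^+ 2.
  rewrite vvT /ekek /sym_pair !mxtraceD !mxtraceZ mxtraceD !mxtrace_delta !eqxx.
  by rewrite [k == j]eq_sym (negPf jk) /=; ring.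
have norm_gt0 : 0 < 1 + t ^+ 2 by have := sqr_ge0 t; lra.
rewrite -vvT; split; [|split].
- by apply: psd_scale (psd_mul_tr v); rewrite invr_ge0 ltW.
- by rewrite mxtraceZ tr_vvT mulVf ?gt_eqF.
apply: Q_vanish => a b Eab; rewrite mxE [r in _ * r]mxE big_ord1 [v^T _ _]mxE.
have v_supp l : v l 0 != 0 -> (l == k) || (l == j).
  by rewrite !mxE !andbT; case: (l == k); case: (l == j); rewrite //= mulr0 addr0 eqxx.
apply/eqP; rewrite mulf_eq0 mulf_eq0; apply/negPn/negP; rewrite !negb_or => /and3P[_].
move=> /v_supp/orP[]/eqP ak /v_supp/orP[]/eqP bk; move: Eab; rewrite ak bk.
- by rewrite (negPf (irrE k)).
- by rewrite (negPf nEkj).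
- by rewrite symE (negPf nEkj).
- by rewrite (negPf (irrE j)).
Qed.

(* One normal vector at [ekek k] for each upper-triangular position [p], nonzero
   at [p]; the factor [s] is chosen so that [s * X k j <= 0] on the set. *)
Definition cone_basis k (s : R) (p : 'I_n * 'I_n) : 'M[R]_n :=
  if p.1 == p.2 then (if p.1 == k then 1 else -1) *: delta_mx p.1 p.1
  else if (p.1 == k) || (p.2 == k) then s *: sym_pair p.1 p.2
  else sym_pair p.1 p.2 - delta_mx p.1 p.1 - delta_mx p.2 p.2.

Lemma cone_basis_symmetric k s p : Defs.symmetric (cone_basis k s p).
Proof.
have sym_delta i : Defs.symmetric (delta_mx i i : 'M[R]_n).
  by rewrite /Defs.symmetric trmx_delta.
rewrite /cone_basis /Defs.symmetric; case: ifP => _; first by rewrite linearZ /= sym_delta.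
case: ifP => _; first by rewrite linearZ /= sym_pair_symmetric.
by rewrite !linearB /= sym_pair_symmetric !sym_delta.
Qed.

Lemma cone_basis_normal Q k s p :
  (forall X, spectraplex Q X -> forall j, j != k -> s * X k j <= 0) ->
  normal_cone (spectraplex Q) (ekek k) (cone_basis k s p).
Proof.
move=> sgn; split=> [|X CX]; first exact: cone_basis_symmetric.
have [psdX [trX _]] := CX; have symX := psd_symmetric psdX.
have ekekE a b : ekek k a b = ((a == k) && (b == k))%:R :> R by rewrite mxE.
rewrite /cone_basis; case: p => i j /=; have [_|ij] := eqVneq i j.
  case: (i =P k) => [->|/eqP ik]; rewrite !tipZl !tip_deltal ekekE.
    by rewrite eqxx /= !mul1r -trX psd_diag_le_trace.
  by rewrite (negPf ik) mulr0 mulN1r oppr_le0 psd_diag_ge0.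
have ekek_ij : ekek k i j = 0 :> R /\ ekek k j i = 0 :> R.
  by rewrite !ekekE; split; apply/eqP; rewrite pnatr_eq0 eqb0; apply: contra ij;
    case/andP => /eqP-> /eqP->.
case: ifP => [kij | /norP[ik jk]].
  rewrite tipZl [r in _ <= r]tipZl !tip_sym_pair ekek_ij.1 ekek_ij.2 addr0 mulr0.
  have sgn2 l : l != k -> s * (X k l + X l k) <= 0.
    by move=> lk; rewrite (symX k l); have := sgn _ CX _ lk; lra.
  case/orP: kij => /eqP kE; subst k; first by apply: sgn2; rewrite eq_sym.
  by rewrite addrC; apply: sgn2.
rewrite !tipBl !tip_sym_pair !tip_deltal !ekekE (negPf ik) (negPf jk) !andbF /=.
by rewrite (symX i j); have := psd_offdiag_le i j psdX; lra.
Qed.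

Lemma cone_basis_offdiagE k s p a b : a != b ->
  cone_basis k s p a b =
  (if p.1 == p.2 then 0 else if (p.1 == k) || (p.2 == k) then s else 1) *
  sym_pair p.1 p.2 a b.
Proof.
move=> ab; have offE x : ((a == x) && (b == x))%:R = 0 :> R.
  by apply/eqP; rewrite pnatr_eq0 eqb0; apply: contra ab => /andP[/eqP-> /eqP->].
rewrite /cone_basis; case: ifP => _; first by rewrite !mxE offE mulr0 mul0r.
by case: ifP => _; rewrite !mxE ?offE ?subr0 ?mul1r.
Qed.

Lemma cone_basis_pivot k s p : s != 0 -> cone_basis k s p p.1 p.2 != 0.
Proof.
move=> s0; have [pE|p12] := eqVneq p.1 p.2.
  rewrite /cone_basis pE eqxx !mxE !eqxx /= mulr1.
  by case: ifP; rewrite ?oppr_eq0 oner_eq0.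
rewrite cone_basis_offdiagE // (negPf p12) sym_pairE !eqxx (negPf p12) /= addr0 mulr1.
by case: ifP; rewrite ?oner_eq0.
Qed.

Lemma cone_basis_offpivot k s (p q : 'I_n * 'I_n) :
  (p.1 < p.2)%N -> (q.1 <= q.2)%N -> p != q ->
  cone_basis k s q p.1 p.2 = 0.
Proof.
case: p q => [p1 p2] [q1 q2] /= p12 q12; rewrite xpair_eqE => pq.
have p1p2 : p1 != p2 by rewrite -val_eqE /= neq_ltn p12.
rewrite (cone_basis_offdiagE _ _ _ p1p2) /= sym_pairE (negPf pq).
have -> : (p1 == q2) && (p2 == q1) = false.
  by apply/negbTE/negP => /andP[/eqP e1 /eqP e2]; move: p12 q12; rewrite e1 e2; lia.
by rewrite /= addr0 mulr0.
Qed.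

Lemma cone_basis_diagpivot k s i q : q.1 == q.2 -> q != (i, i) -> cone_basis k s q i i = 0.
Proof.
case: q => j j' /= /eqP <-{j'}; rewrite xpair_eqE andbb => ji.
by rewrite /cone_basis /= eqxx !mxE [i == j]eq_sym (negPf ji) /= mulr0.
Qed.

Lemma ekek_vertex Q k (s : R) : s != 0 -> spectraplex Q (ekek k) ->
  (forall X, spectraplex Q X -> forall j, j != k -> s * X k j <= 0) ->
  is_vertex (spectraplex Q) (ekek k).
Proof.
move=> s0 Cek sgn; split=> //.
pose offdiag (p : 'I_n * 'I_n) := p.1 != p.2.
pose offs := [seq p <- enum (upper_pairs n) | offdiag p].
pose diags := [seq p <- enum (upper_pairs n) | ~~ offdiag p].
have uniq_pairwise_in (P : seq ('I_n * 'I_n)) (r : rel ('I_n * 'I_n)) : uniq P ->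
    {in P &, forall p q, p != q -> r p q} -> pairwise r P.
  rewrite uniq_pairwise => uP rP; apply: sub_in_pairwise (allss P) uP => p q pP qP.
  exact: rP.
have mem_offs p : (p \in offs) = offdiag p && (p.1 <= p.2)%N.
  by rewrite mem_filter mem_enum.
have mem_diags p : (p \in diags) = (p.1 == p.2) && (p.1 <= p.2)%N.
  by rewrite mem_filter mem_enum /offdiag negbK.
have offs_lt p : p \in offs -> (p.1 < p.2)%N.
  by rewrite mem_offs => /andP[pd pu]; rewrite ltn_neqAle pu andbT val_eqE.
apply: (normal_cone_full (s := map (cone_basis k s) (offs ++ diags))).
- by move=> c /mapP[p _ ->]; apply: cone_basis_normal.
- apply: (free_echelon (piv := id)); first by apply/allP => p _; apply: cone_basis_pivot.
  rewrite pairwise_cat; apply/and3P; split.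
  + apply/allrelP => p q p_off; rewrite mem_diags => /andP[qd q12]; apply/eqP.
    apply: cone_basis_offpivot (offs_lt _ p_off) q12 _; apply: contraTneq qd => <-.
    by move: p_off; rewrite mem_offs => /andP[].
  + apply: uniq_pairwise_in; first by rewrite filter_uniq ?enum_uniq.
    move=> p q /offs_lt p12; rewrite mem_offs => /andP[_ q12] pq.
    by apply/eqP/cone_basis_offpivot.
  + apply: uniq_pairwise_in; first by rewrite filter_uniq ?enum_uniq.
    move=> [i i'] q; rewrite !mem_diags /= => /andP[/eqP <-{i'} _] /andP[qd _] pq.
    by apply/eqP; rewrite cone_basis_diagpivot // eq_sym.
by rewrite size_map size_cat !size_filter count_predC -cardE card_upper_pairs.
Qed.

End SymmetricMatrices.

Lemma full_degP n (E : rel 'I_n) k : ~~ E k k ->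
  full_deg E k <-> (forall j, j != k -> E k j).
Proof.
move=> nEkk; rewrite /full_deg /deg.
have -> : (n - 1)%N = #|[set~ k]| by rewrite cardsC1 card_ord subn1.
have sub : [set j | E k j] \subset [set~ k].
  by apply/subsetP => j; rewrite !inE; apply: contraTneq => ->.
split=> [/subset_cardP/(_ sub) eqA j jk | adj]; first by have := eqA j; rewrite !inE jk.
apply: eq_card => j; rewrite !inE.
by apply/idP/idP=> [|jk]; [apply: contraTneq => -> | exact: adj].
Qed.

Lemma vertex_full_degP (R : realType) n (Q : 'M[R]_n -> Prop) (E : rel 'I_n) :
  simple_graph E -> scaling_invariant Q ->
  (forall X : 'M[R]_n, (forall i j, E i j -> X i j = 0) -> Q X) ->
  (forall X, Q X -> forall i j, E i j -> X i j <= 0) ->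
  forall X, is_vertex (spectraplex Q) X <-> exists k, full_deg E k /\ X = ekek k.
Proof.
move=> G invQ Q_vanish Q_nonpos X; have irrE := G.2.
split=> [vX | [k [/(full_degP (irrE k)) adj ->]]].
  have [k Xk] := vertex_eq_ekek invQ vX; exists k; split=> //.
  apply/(full_degP (irrE k)) => j; apply: vertex_ekek_adj G Q_vanish _; by rewrite -Xk.
apply: (ekek_vertex (s := 1)) => [|| Y [_ [_ QY]] j jk]; first exact: oner_neq0.
  by apply/spectraplex_ekek/Q_vanish => i j; apply: ekek_edge_eq0.
by rewrite mul1r Q_nonpos ?adj.
Qed.

Theorem corollary3p7 (R : realType) (n : nat) (E : rel 'I_n) :
  simple_graph E ->
  (forall X : 'M[R]_n,
      is_vertex (spec1 E) X <-> exists k, full_deg E k /\ X = ekek k) /\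
  (forall X : 'M[R]_n,
      is_vertex (spec2 E) X <-> exists k, X = ekek k) /\
  (forall X : 'M[R]_n,
      is_vertex (spec3 E) X <-> exists k, full_deg E k /\ X = ekek k).
Proof.
move=> G; pose vanish_on (X : 'M[R]_n) := forall i j, E i j -> X i j = 0.
have vanish_inv : scaling_invariant vanish_on.
  by move=> a Y _ Y0 i j /Y0 Yij; rewrite mxE Yij mulr0.
split; [|split].
- by apply: (vertex_full_degP (Q := vanish_on)) => // Y Y0 i j /Y0 ->.
- pose Q (X : 'M[R]_n) := vanish_on X /\ forall i j, i != j -> ~~ E i j -> 0 <= X i j.
  have invQ : scaling_invariant Q.
    move=> a Y a_gt0 [Y0 Y_ge0]; split=> [|i j ij nEij]; first exact: vanish_inv.
    by rewrite mxE; apply: mulr_ge0; [apply: ltW | apply: Y_ge0].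
  move=> X; split=> [/(vertex_eq_ekek (Q := Q) invQ) // | [k ->]].
  apply: (ekek_vertex (Q := Q) (s := -1)) => [|| Y [_ [_ [Y0 Y_ge0]]] j jk].
  + by rewrite oppr_eq0 oner_eq0.
  + apply: spectraplex_ekek; split=> [i j|i j _ _]; first exact: ekek_edge_eq0.
    by rewrite mxE ler0n.
  rewrite mulN1r oppr_le0; case Ekj: (E k j); first by rewrite Y0.
  by rewrite Y_ge0 ?Ekj // eq_sym.
- apply: (vertex_full_degP (Q := fun X => forall i j, E i j -> X i j <= 0)) => //.
  + by move=> a Y a_gt0 Y0 i j /Y0 Yij; rewrite mxE pmulr_rle0.
  + by move=> Y Y0 i j /Y0 ->.
Qed.
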